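(* Let $\Bbbk$ be a field of characteristic $\neq 2$ and let $A_1,\dots,A_m\in\Bbbk^{n\times n}$ be symmetric matrices. Fix an integer $t\ge 1$. The map sending an ordered simultaneous block decomposition $(V_1,\dots,V_t)$ of $A_1,\dots,A_m$ to the $t$-tuple $(\epsilon_1,\dots,\epsilon_t)$, where $\epsilon_j\in\Bbbk^{n\times n}$ is the projection of $\Bbbk^n$ onto $V_j$ along $\bigoplus_{l\neq j}V_l$, is a bijection from the set of ordered simultaneous block decompositions of length $t$ of $A_1,\dots,A_m$ onto the set of ordered complete sets of $t$ orthogonal idempotents of $Z(A_1,\dots,A_m)$. In particular, $A_1,\dots,A_m$ admit a simultaneous block diagonalization via congruence with $t$ blocks, i.e. there are $P\in \mathrm{GL}_n(\Bbbk)$ and $n_1,\dots,n_t\ge 1$ with $\sum_j n_j=n$ such that every $P^TA_iP$ is block diagonal with diagonal blocks of sizes $n_1,\dots,n_t$, if and only if $Z(A_1,\dots,A_m)$ contains a complete set of $t$ orthogonal idempotents.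
   Context: The center of symmetric matrices $A_1,\dots,A_m\in\Bbbk^{n\times n}$ is $Z(A_1,\dots,A_m)=\{X\in\Bbbk^{n\times n} : (A_iX)^T=A_iX \text{ for all } 1\le i\le m\}$. An ordered simultaneous block decomposition of length $t$ of $A_1,\dots,A_m$ is a $t$-tuple $(V_1,\dots,V_t)$ of nonzero subspaces of $\Bbbk^n$ with $\Bbbk^n=V_1\oplus\cdots\oplus V_t$ such that $x^TA_iy=0$ for all $i$, all $j\neq l$, all $x\in V_j$, $y\in V_l$ (equivalently, if $P$ is an invertible matrix whose columns are a basis of $V_1$ followed by a basis of $V_2$, etc., then each $P^TA_iP$ is block diagonal with blocks of sizes $\dim V_1,\dots,\dim V_t$). An ordered complete set of $t$ orthogonal idempotents of $Z(A_1,\dots,A_m)$ is a $t$-tuple $(\epsilon_1,\dots,\epsilon_t)$ of nonzero matrices in $Z(A_1,\dots,A_m)$ with $\epsilon_j^2=\epsilon_j$ for all $j$, $\epsilon_j\epsilon_l=0$ for $j\neq l$, and $\sum_j\epsilon_j=I_n$ (matrix products). *)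

From HB Require Import structures.
From mathcomp Require Import all_boot all_order all_algebra.
Set Implicit Arguments. Unset Strict Implicit. Unset Printing Implicit Defensive.
Import GRing.Theory.
Local Open Scope ring_scope.

Definition in_center (F : fieldType) (n m : nat) (A : 'I_m -> 'M[F]_n)
  (X : 'M[F]_n) : Prop :=
  forall i : 'I_m, (A i *m X)^T = A i *m X.

Definition is_sbd (F : fieldType) (n m t : nat) (A : 'I_m -> 'M[F]_n)
  (V : 'I_t -> {vspace 'cV[F]_n}) : Prop :=
  [/\ forall j, V j != 0%VS,
      directv (\sum_(j < t) V j)%VS,
      (\sum_(j < t) V j)%VS = fullv &
      forall (i : 'I_m) (j l : 'I_t), j != l ->
        forall x y : 'cV[F]_n, x \in V j -> y \in V l ->
          x^T *m A i *m y = 0].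

Definition is_coi (F : fieldType) (n m t : nat) (A : 'I_m -> 'M[F]_n)
  (E : 'I_t -> 'M[F]_n) : Prop :=
  [/\ forall j, in_center A (E j),
      forall j, E j != 0,
      forall j, E j *m E j = E j,
      forall j l, j != l -> E j *m E l = 0 &
      \sum_(j < t) E j = 1%:M].

Definition is_proj_family (F : fieldType) (n t : nat)
  (V : 'I_t -> {vspace 'cV[F]_n}) (E : 'I_t -> 'M[F]_n) : Prop :=
  forall (j l : 'I_t) (v : 'cV[F]_n), v \in V l ->
    E j *m v = (if j == l then v else 0).

Definition in_block (n t : nat) (s : 'I_t -> nat) (j : 'I_t) (a : 'I_n) : bool :=
  ((\sum_(l < t | (l < j)%N) s l)%N <= a)%N &&
  (a < (\sum_(l < t | (l <= j)%N) s l)%N)%N.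

Definition block_diag (F : fieldType) (n t : nat) (s : 'I_t -> nat)
  (M : 'M[F]_n) : Prop :=
  forall (j l : 'I_t), j != l -> forall a b : 'I_n,
    in_block s j a -> in_block s l b -> M a b = 0.

From HB Require Import structures.
From mathcomp Require Import all_boot all_order all_algebra.
From Stdlib Require Import FunctionalExtensionality.
Import GRing.Theory.
Local Open Scope ring_scope.
Set Implicit Arguments. Unset Strict Implicit.

(** The projections attached to a decomposition [k^n = V_1 (+) ... (+) V_t] are
   complete orthogonal idempotents, and the decomposition is orthogonal for a
   symmetric form [A] exactly when they are self-adjoint for [A]; since
   [(A X)^T = X^T A], self-adjointness is membership in the center.  Conversely
   the images of complete orthogonal idempotents [E_j] of the center are a
   direct decomposition, orthogonal because [E_j^T A E_l = A E_j E_l = 0].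
   In matrix form, a congruence [P^T A_i P] that is block diagonal commutes
   with the diagonal block idempotents, whose conjugates by [P] then lie in the
   center; and conversely, stacking bases of the row spaces of the [E_j^T]
   gives such a [P]. *)

Section MatrixEndomorphisms.
Variables (F : fieldType) (n : nat).
Implicit Types (M N : 'M[F]_n).

Lemma mx_cV_ext M N : (forall v : 'cV[F]_n, M *m v = N *m v) -> M = N.
Proof.
move=> eqMN; apply/matrixP => a b.
by have := congr1 (fun v : 'cV_n => v a 0) (eqMN (delta_mx b 0)); rewrite -!colE !mxE.
Qed.

Lemma mx_form_ext M N :
  (forall x y : 'cV[F]_n, x^T *m M *m y = x^T *m N *m y) -> M = N.
Proof.
move=> eqMN; apply/matrixP => a b.
have := congr1 (fun u : 'M_1 => u 0 0) (eqMN (delta_mx a 0) (delta_mx b 0)).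
by rewrite trmx_delta -!rowE -!colE !mxE.
Qed.

Definition lfun_mx (f : 'End('cV[F]_n)) : 'M[F]_n :=
  \matrix_(a, b) f (delta_mx b 0) a 0.

Lemma mul_lfun_mx f v : lfun_mx f *m v = f v.
Proof.
have {2}-> : v = \sum_b v b 0 *: delta_mx b 0.
  apply/colP => a; rewrite summxE (bigD1 a) //= big1 => [|b /negPf nba].
    by rewrite !mxE !eqxx mulr1 addr0.
  by rewrite !mxE eq_sym nba mulr0.
rewrite linear_sum /=; apply/colP => a; rewrite !mxE summxE.
by apply: eq_bigr => b _; rewrite linearZ /= !mxE mulrC.
Qed.

Definition mx_img M : {vspace 'cV[F]_n} :=
  limg (linfun (mulmx M) : 'End('cV[F]_n)).

Lemma mul_mx_img M u : M *m u \in mx_img M.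
Proof. by rewrite -(lfunE (mulmx M)) memv_img ?memvf. Qed.

Lemma mx_imgP M v : v \in mx_img M -> exists u, v = M *m u.
Proof. by case/memv_imgP => u _ ->; exists u; rewrite lfunE. Qed.

End MatrixEndomorphisms.

Section DirectSumProjections.
Variables (F : fieldType) (vT : vectType F) (t : nat) (V : 'I_t -> {vspace vT}).

Definition dsum_proj (j : 'I_t) : 'End(vT) := sumv_pi (\sum_(l < t) V l)%VS j.

Lemma dsum_proj_mem j v : dsum_proj j v \in V j.
Proof. exact: memv_sum_pi. Qed.

Hypotheses (dirV : directv (\sum_(j < t) V j)) (fullV : (\sum_(j < t) V j)%VS = fullv).

Lemma sum_dsum_proj v : \sum_j dsum_proj j v = v.
Proof. by apply: sumv_pi_sum; rewrite fullV memvf. Qed.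

Lemma dsum_projE j l v : v \in V l -> dsum_proj j v = if j == l then v else 0.
Proof.
move=> vVl; have vVcomp i : true -> (if i == l then v else 0) \in V i.
  by move=> _; case: eqP => [->|_]; rewrite ?mem0v.
have := directv_sum_unique (P := xpredT) dirV (fun j => dsum_proj j v)
  (fun j => if j == l then v else 0) (fun i _ => dsum_proj_mem i v) vVcomp.
rewrite sum_dsum_proj (bigD1 l) //= eqxx big1 ?addr0 => [|i /negPf -> //].
by rewrite eqxx => /esym/forall_inP/(_ j isT)/eqP.
Qed.

End DirectSumProjections.

Section ProjectionMatrices.
Variables (F : fieldType) (n t : nat) (V : 'I_t -> {vspace 'cV[F]_n}).
Hypotheses (dirV : directv (\sum_(j < t) V j)) (fullV : (\sum_(j < t) V j)%VS = fullv).

Definition proj_mx (j : 'I_t) : 'M[F]_n := lfun_mx (dsum_proj V j).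

Lemma proj_family_proj_mx : is_proj_family V proj_mx.
Proof. by move=> j l v vVl; rewrite mul_lfun_mx (dsum_projE dirV fullV _ vVl). Qed.

Lemma proj_familyE E j w : is_proj_family V E -> E j *m w = dsum_proj V j w.
Proof.
move=> projE; rewrite -{1}(sum_dsum_proj fullV w) mulmx_sumr (bigD1 j) //=.
rewrite (projE j j) ?dsum_proj_mem // eqxx big1 ?addr0 // => l /negPf nlj.
by rewrite (projE j l) ?dsum_proj_mem // eq_sym nlj.
Qed.

Lemma proj_family_uniq E : is_proj_family V E -> E = proj_mx.
Proof.
move=> projE; apply: functional_extensionality => j; apply: mx_cV_ext => v.
by rewrite (proj_familyE j v projE) -(proj_familyE j v proj_family_proj_mx).
Qed.

Definition form_orth (B : 'M[F]_n) :=
  forall j l, j != l -> forall x y, x \in V j -> y \in V l -> x^T *m B *m y = 0.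

Lemma dsum_proj_adjoint (B : 'M[F]_n) j x y : form_orth B ->
  (dsum_proj V j x)^T *m B *m y = x^T *m B *m dsum_proj V j y.
Proof.
move=> orthB; set u := dsum_proj V j x; set w := dsum_proj V j y.
have uVj : u \in V j := dsum_proj_mem V j x.
have wVj : w \in V j := dsum_proj_mem V j y.
transitivity (u^T *m B *m w).
  rewrite -{1}(sum_dsum_proj fullV y) mulmx_sumr (bigD1 j) //= big1 ?addr0 //.
  by move=> l nlj; apply: (orthB j l) => //; rewrite ?dsum_proj_mem // eq_sym.
rewrite -(sum_dsum_proj fullV x) linear_sum /= !mulmx_suml (bigD1 j) //=.
rewrite big1 ?addr0 // => l nlj; exact: (orthB l j) (dsum_proj_mem V l x) wVj.
Qed.

End ProjectionMatrices.

Section IdempotentImages.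
Variables (F : fieldType) (n t : nat) (E : 'I_t -> 'M[F]_n).
Hypotheses (idemE : forall j, E j *m E j = E j)
  (orthE : forall j l, j != l -> E j *m E l = 0)
  (sumE : \sum_(j < t) E j = 1%:M).

Lemma mx_img_idem j v : v \in mx_img (E j) -> E j *m v = v.
Proof. by case/mx_imgP => u ->; rewrite mulmxA idemE. Qed.

Lemma proj_family_mx_img : is_proj_family (fun j => mx_img (E j)) E.
Proof.
move=> j l v /mx_img_idem <-; rewrite mulmxA.
by case: eqP => [->|/eqP njl]; rewrite ?idemE ?orthE ?mul0mx.
Qed.

Lemma directv_mx_img : directv (\sum_(j < t) mx_img (E j)).
Proof.
apply/directv_sum_independent => u uE sum_u0 j _.
have <- : E j *m \sum_l u l = u j.
  rewrite mulmx_sumr (bigD1 j) //= -{2}(mx_img_idem (uE j isT)).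
  rewrite big1 ?addr0 // => l nlj.
  by rewrite -(mx_img_idem (uE l isT)) mulmxA orthE ?mul0mx // eq_sym.
by rewrite sum_u0 mulmx0.
Qed.

Lemma sum_mx_img : (\sum_(j < t) mx_img (E j))%VS = fullv.
Proof.
apply/eqP; rewrite eqEsubv subvf; apply/subvP => v _.
rewrite -[v]mul1mx -sumE mulmx_suml; apply: memv_sumr => j _.
exact: mul_mx_img.
Qed.

End IdempotentImages.

Section Center.
Variables (F : fieldType) (n m : nat) (A : 'I_m -> 'M[F]_n).
Hypothesis symA : forall i, (A i)^T = A i.

Lemma in_centerP X : in_center A X <-> forall i, X^T *m A i = A i *m X.
Proof.
split=> centX i; first by rewrite -[in LHS]symA -trmx_mul centX.
by rewrite trmx_mul symA centX.
Qed.

Lemma center_mul_eq0 (X : 'M[F]_n) p (Y : 'M[F]_(n, p)) i :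
  in_center A X -> X *m Y = 0 -> X^T *m A i *m Y = 0.
Proof. by move=> /in_centerP centX XY0; rewrite centX -mulmxA XY0 mulmx0. Qed.

Lemma sbd_coi_proj t (V : 'I_t -> {vspace 'cV[F]_n}) :
  is_sbd A V -> is_coi A (proj_mx V).
Proof.
case=> nzV dirV fullV orthV; have projV := proj_family_proj_mx dirV fullV.
have projE j v : proj_mx V j *m v = dsum_proj V j v := proj_familyE fullV j v projV.
split.
- move=> j; apply/in_centerP => i; apply: mx_form_ext => x y.
  rewrite !mulmxA -trmx_mul -!mulmxA !projE !mulmxA.
  exact: (dsum_proj_adjoint fullV j x y (orthV i)).
- move=> j; apply: contra_neq (nzV j) => E0; apply/vspaceP => v; rewrite memv0.
  apply/idP/eqP => [vVj|->]; last exact: mem0v.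
  by move: (projV j j v vVj); rewrite eqxx E0 mul0mx => <-.
- move=> j; apply: mx_cV_ext => v; rewrite -mulmxA !projE.
  by rewrite (dsum_projE dirV fullV _ (dsum_proj_mem V j v)) eqxx.
- move=> j l njl; apply: mx_cV_ext => v; rewrite -mulmxA !projE mul0mx.
  by rewrite (dsum_projE dirV fullV _ (dsum_proj_mem V l v)) (negPf njl).
- apply: mx_cV_ext => v; rewrite mulmx_suml mul1mx.
  by under eq_bigr do rewrite projE; rewrite (sum_dsum_proj fullV).
Qed.

Lemma coi_sbd_mx_img t (E : 'I_t -> 'M[F]_n) :
  is_coi A E -> is_sbd A (fun j => mx_img (E j)).
Proof.
case=> centE nzE idemE orthE sumE; split.
- move=> j; apply: contra_neq (nzE j) => img0; apply: mx_cV_ext => v.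
  by have := mul_mx_img (E j) v; rewrite img0 memv0 mul0mx => /eqP.
- exact: directv_mx_img.
- exact: sum_mx_img.
- move=> i j l njl x y /(mx_img_idem idemE) <- /(mx_img_idem idemE) <-.
  rewrite trmx_mul -!mulmxA (mulmxA (A i)) !(mulmxA (E j)^T).
  by rewrite (center_mul_eq0 _ (centE j) (orthE j l njl)) mul0mx mulmx0.
Qed.

End Center.

Lemma proj_family_subv (F : fieldType) n t (V W : 'I_t -> {vspace 'cV[F]_n})
    (E : 'I_t -> 'M[F]_n) j :
  (\sum_(l < t) W l)%VS = fullv -> is_proj_family V E -> is_proj_family W E ->
  (V j <= W j)%VS.
Proof.
move=> fullW projV projW; apply/subvP => v vVj.
move: (projV j j v vVj); rewrite eqxx (proj_familyE fullW j v projW) => <-.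
exact: dsum_proj_mem.
Qed.

Lemma proj_family_inj (F : fieldType) n t (V W : 'I_t -> {vspace 'cV[F]_n})
    (E : 'I_t -> 'M[F]_n) :
  (\sum_(l < t) V l)%VS = fullv -> (\sum_(l < t) W l)%VS = fullv ->
  is_proj_family V E -> is_proj_family W E -> V = W.
Proof.
move=> fullV fullW projV projW; apply: functional_extensionality => j.
apply/eqP; rewrite eqEsubv.
by rewrite (proj_family_subv j fullW projV projW) (proj_family_subv j fullV projW projV).
Qed.

Section Blocks.
Variables (F : fieldType) (t : nat) (s : 'I_t -> nat) (n : nat).
Hypothesis sum_s : (\sum_(j < t) s j)%N = n.

(* The block containing [a], read off the identification of ['I_n] with the
   disjoint union of the ['I_(s j)]. *)
Definition block_of (a : 'I_n) : 'I_t := tagnat.sig1 (cast_ord (esym sum_s) a).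

Lemma in_blockE j a : in_block s j a = (j == block_of a).
Proof.
have sum_le : (\sum_(l < t | (l <= j)%N) s l = \sum_(l < t | (l < j)%N) s l + s j)%N.
  rewrite (bigD1 j) //= addnC; congr (_ + _)%N.
  by apply: eq_bigl => l; rewrite ltn_neqAle andbC.
rewrite /in_block sum_le /block_of.
have -> : nat_of_ord a = cast_ord (esym sum_s) a by [].
move: (cast_ord (esym sum_s) a) => c; apply/idP/eqP => [/andP[lo hi] | ->].
  have c_off : (c - \sum_(l < t | (l < j)%N) s l < s j)%N by rewrite ltn_subLR.
  rewrite -(tagnat.Rank1K (Ordinal c_off)); congr tagnat.sig1; apply: ord_inj.
  by rewrite tagnat.RankEsum /= subnKC.
by rewrite (tagnat.rect c) leq_addr ltn_add2l ltn_ord.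
Qed.

Lemma block_of_surj j : (0 < s j)%N -> exists a, block_of a = j.
Proof.
move=> s_pos; exists (cast_ord sum_s (tagnat.Rank j (Ordinal s_pos))).
by rewrite /block_of cast_ordK tagnat.Rank1K.
Qed.

Definition block_idem j : 'M[F]_n := diag_mx (\row_a (j == block_of a)%:R).

Lemma block_idem_tr j : (block_idem j)^T = block_idem j.
Proof. exact: tr_diag_mx. Qed.

Lemma block_idem_idem j : block_idem j *m block_idem j = block_idem j.
Proof.
rewrite mulmx_diag; congr diag_mx; apply/rowP => a; rewrite !mxE.
by case: eqP; rewrite ?mulr1 ?mulr0.
Qed.

Lemma block_idem_orth j l : j != l -> block_idem j *m block_idem l = 0.
Proof.
move=> njl; rewrite mulmx_diag (_ : \row__ _ = 0) ?raddf0 //.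
apply/rowP => a; rewrite !mxE.
case: (eqVneq j (block_of a)) => [ja|]; last by rewrite mul0r.
by rewrite -ja eq_sym (negPf njl) mulr0.
Qed.

Lemma sum_block_idem : \sum_(j < t) block_idem j = 1%:M.
Proof.
rewrite -raddf_sum -diag_const_mx; congr diag_mx; apply/rowP => a.
rewrite summxE !mxE (bigD1 (block_of a)) //= mxE eqxx big1 ?addr0 // => j /negPf nja.
by rewrite mxE nja.
Qed.

Lemma block_idem_neq0 j : (0 < s j)%N -> block_idem j != 0.
Proof.
case/block_of_surj => a aj; apply/eqP => /matrixP/(_ a a)/eqP.
by rewrite !mxE aj !eqxx oner_eq0.
Qed.

Lemma block_diag_idem_comm M j :
  block_diag s M -> block_idem j *m M = M *m block_idem j.
Proof.
move=> bdM; rewrite mul_diag_mx mul_mx_diag; apply/matrixP => a b; rewrite !mxE.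
have [-> | nab] := eqVneq (block_of a) (block_of b); first by rewrite mulrC.
by rewrite (bdM _ _ nab a b) ?in_blockE ?mulr0 ?mul0r.
Qed.

End Blocks.

Lemma coi_congr (F : fieldType) n m (A : 'I_m -> 'M[F]_n) t (P : 'M[F]_n)
    (D : 'I_t -> 'M[F]_n) :
  P \in unitmx -> is_coi (fun i => P^T *m A i *m P) D ->
  is_coi A (fun j => P *m D j *m invmx P).
Proof.
move=> unitP [centD nzD idemD orthD sumD]; set Q := invmx P.
have QP : Q *m P = 1%:M by rewrite mulVmx.
have PQ : P *m Q = 1%:M by rewrite mulmxV.
have conj_mul X Y : P *m X *m Q *m (P *m Y *m Q) = P *m (X *m Y) *m Q.
  by rewrite !mulmxA -(mulmxA _ Q) QP mulmx1.
split.
- move=> j i; have centBD : (P^T *m A i *m P *m D j)^T = P^T *m A i *m P *m D j.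
    exact: centD.
  have defA : A i = Q^T *m (P^T *m A i *m P) *m Q.
    by rewrite !mulmxA -trmx_mul PQ trmx1 mul1mx -mulmxA PQ mulmx1.
  move: (P^T *m A i *m P) defA centBD => B -> centBD.
  rewrite !mulmxA -(mulmxA _ Q P) QP mulmx1 -(mulmxA Q^T).
  by rewrite trmx_mul trmx_mul trmxK centBD mulmxA.
- move=> j; apply: contraNneq (nzD j) => PDQ0.
  have -> : D j = Q *m (P *m D j *m Q) *m P.
    by rewrite !mulmxA QP mul1mx -mulmxA QP mulmx1.
  by rewrite PDQ0 mulmx0 mul0mx.
- by move=> j; rewrite conj_mul idemD.
- by move=> j l njl; rewrite conj_mul orthD // mulmx0 mul0mx.
- by rewrite -mulmx_suml -mulmx_sumr sumD mulmx1 PQ.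
Qed.

Lemma block_diag_coi (F : fieldType) n m (B : 'I_m -> 'M[F]_n) t (s : 'I_t -> nat)
    (sum_s : (\sum_(j < t) s j)%N = n) :
  (forall i, (B i)^T = B i) -> (forall i, block_diag s (B i)) ->
  (forall j, 0 < s j)%N ->
  is_coi B (block_idem F sum_s).
Proof.
move=> symB bdB s_pos; split.
- by move=> j i; rewrite trmx_mul symB block_idem_tr block_diag_idem_comm.
- by move=> j; apply: block_idem_neq0.
- exact: block_idem_idem.
- exact: block_idem_orth.
- exact: sum_block_idem.
Qed.

Section IdempotentBasis.
Variables (F : fieldType) (n t : nat) (T : 'I_t -> 'M[F]_n).
Hypotheses (idemT : forall j, T j *m T j = T j)
  (orthT : forall j l, j != l -> T j *m T l = 0)
  (sumT : \sum_(j < t) T j = 1%:M).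

Lemma mxdirect_sum_idem : mxdirect (\sum_(j < t) T j).
Proof.
apply/mxdirect_sumsP => j _; apply/eqP; rewrite -submx0; apply/rV_subP => v.
rewrite sub_capmx submx0 => /andP[/submxP[w ->] /sub_sumsmxP[u wT_sum]].
rewrite -idemT mulmxA wT_sum mulmx_suml big1 // => l /andP[_ nlj].
by rewrite -mulmxA orthT ?mulmx0.
Qed.

Lemma sum_rank_idem : (\sum_(j < t) \rank (T j))%N = n.
Proof.
have full : (1%:M <= \sum_(j < t) T j)%MS.
  by rewrite -[X in (X <= _)%MS]sumT; apply: summx_sub => j _; apply: (sumsmx_sup j).
have /mxdirectP/= <- := mxdirect_sum_idem.
by apply/eqP; rewrite eqn_leq rank_leq_col -{1}(mxrank1 F n) mxrankS.
Qed.

Definition idem_basis : 'M[F]_n :=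
  castmx (sum_rank_idem, erefl n) (\mxcol_j row_base (T j)).

Lemma idem_basis_unit : idem_basis \in unitmx.
Proof.
rewrite -row_full_unit row_full_castmx -sub1mx -sumT; apply: summx_sub => j _.
apply: submx_trans (_ : row_base (T j) <= _)%MS; first by rewrite eq_row_base.
by rewrite -(mxcolK (fun l => row_base (T l)) j) rowsub_sub.
Qed.

Lemma row_idem_basis_sub j a :
  in_block (fun l => \rank (T l)) j a -> (row a idem_basis <= T j)%MS.
Proof.
rewrite (in_blockE sum_rank_idem) => /eqP ->.
have -> : row a idem_basis =
    row (cast_ord (esym sum_rank_idem) a) (\mxcol_l row_base (T l)).
  by apply/rowP => k; rewrite mxE [RHS]mxE /idem_basis castmxE cast_ord_id.
by rewrite row_mxcol (submx_trans (row_sub _ _)) ?eq_row_base.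
Qed.

End IdempotentBasis.

Lemma mulmx_entry_row_col (F : fieldType) p q r
    (X : 'M[F]_(p, q)) (Y : 'M[F]_(q, r)) a b :
  (X *m Y) a b = (row a X *m col b Y) 0 0.
Proof. by rewrite !mxE; apply: eq_bigr => k _; rewrite !mxE. Qed.

Lemma coi_block_diag (F : fieldType) n m (A : 'I_m -> 'M[F]_n) t
    (E : 'I_t -> 'M[F]_n) :
  (forall i, (A i)^T = A i) -> is_coi A E ->
  exists P : 'M[F]_n, exists s : 'I_t -> nat,
    [/\ P \in unitmx, (forall j, 1 <= s j)%N, (\sum_(j < t) s j)%N = n &
        forall i, block_diag s (P^T *m A i *m P)].
Proof.
move=> symA [centE nzE idemE orthE sumE]; pose T j := (E j)^T.
have idemT j : T j *m T j = T j by rewrite -trmx_mul idemE.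
have orthT j l : j != l -> T j *m T l = 0.
  by move=> njl; rewrite -trmx_mul orthE 1?eq_sym // trmx0.
have sumT : \sum_(j < t) T j = 1%:M by rewrite -[1%:M]trmx1 -sumE raddf_sum.
pose C := idem_basis idemT orthT sumT.
exists C^T, (fun j => \rank (T j)); split.
- by rewrite unitmx_tr idem_basis_unit.
- move=> j; rewrite lt0n mxrank_eq0; apply: contra (nzE j) => /eqP T0.
  by rewrite -[E j]trmxK -/(T j) T0 trmx0.
- exact: sum_rank_idem.
- move=> i j l njl a b aj bl; rewrite trmxK mulmx_entry_row_col row_mul -tr_row.
  have /submxP[x ->] := row_idem_basis_sub idemT orthT sumT aj.
  have /submxP[y ->] := row_idem_basis_sub idemT orthT sumT bl.
  rewrite trmx_mul trmxK -!mulmxA (mulmxA (A i)) !(mulmxA (T j)).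
  by rewrite (center_mul_eq0 symA _ (centE j) (orthE j l njl)) mul0mx mulmx0 mxE.
Qed.

Theorem mainTheorem1 (F : fieldType) (hF : (2 \notin [pchar F])%N)
  (n m : nat) (A : 'I_m -> 'M[F]_n) (hA : forall i, (A i)^T = A i)
  (t : nat) (ht : (1 <= t)%N) :
  (forall V : 'I_t -> {vspace 'cV[F]_n}, is_sbd A V ->
     exists E : 'I_t -> 'M[F]_n,
       [/\ is_proj_family V E, is_coi A E &
           forall E', is_proj_family V E' -> E' = E]) /\
  (forall (V V' : 'I_t -> {vspace 'cV[F]_n}) (E : 'I_t -> 'M[F]_n),
     is_sbd A V -> is_sbd A V' -> is_proj_family V E -> is_proj_family V' E ->
     V = V') /\
  (forall E : 'I_t -> 'M[F]_n, is_coi A E ->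
     exists V : 'I_t -> {vspace 'cV[F]_n}, is_sbd A V /\ is_proj_family V E) /\
  ((exists P : 'M[F]_n, exists s : 'I_t -> nat,
      [/\ P \in unitmx, (forall j, (1 <= s j)%N), (\sum_(j < t) s j)%N = n &
          forall i, block_diag s (P^T *m A i *m P)]) <->
   (exists E : 'I_t -> 'M[F]_n, is_coi A E)).
Proof.
split=> [V sbdV | ].
  have [_ dirV fullV _] := sbdV; exists (proj_mx V); split.
  - exact: proj_family_proj_mx.
  - exact: sbd_coi_proj.
  - by move=> E' /(proj_family_uniq dirV fullV).
split=> [V V' E [_ _ fullV _] [_ _ fullV' _] | ].
  exact: proj_family_inj.
split=> [E coiE | ].
  exists (fun j => mx_img (E j)); split; first exact: coi_sbd_mx_img.
  by case: coiE => _ _ idemE orthE _; exact: (proj_family_mx_img idemE orthE).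
split=> [[P [s [unitP s_pos sum_s bdA]]] | [E coiE]]; last exact: coi_block_diag hA coiE.
exists (fun j => P *m block_idem F sum_s j *m invmx P); apply: coi_congr unitP _.
apply: block_diag_coi bdA s_pos => i.
by rewrite !trmx_mul trmxK hA mulmxA.
Qed.
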